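(* Let $K$ be a field of characteristic zero, and suppose $F\in K[X]$ has the property that $u\circ F\circ v$ has at least two monomial terms whenever $u,v\in K[X]$ are of degree one. Then the equation $F\circ b=a\circ F$ has only finitely many solutions in degree-one polynomials $a,b\in K[X]$.
   Context: $\circ$ denotes composition of polynomials. *)

From mathcomp Require Import all_boot all_order all_algebra.
Set Implicit Arguments. Unset Strict Implicit. Unset Printing Implicit Defensive.
Import GRing.Theory.
Local Open Scope ring_scope.

Definition nterms (K : fieldType) (p : {poly K}) : nat :=
  count (fun c : K => c != 0) (polyseq p).

From mathcomp Require Import all_boot all_order all_algebra.
From Stdlib Require Import Classical.

(* Let m = deg F. Translating by the root of the (m-1)-th derivative (the
   Tschirnhaus shift h = X + c) makes G = F o h depressed, i.e. without an
   X^(m-1) term, and conjugation by h turns a solution (a, b) into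
   G o b' = a o G with b' = gX + d linear.  Comparing coefficients of X^(m-1)
   forces d = 0 in characteristic zero; then comparing coefficients of X^m and
   of X^i, where 0 < i < m and G_i != 0 (this is where the two-terms
   hypothesis enters, with u = X - G(0)), gives a = g^m X + (1 - g^m) G(0) and
   g^(m-i) = 1.  Thus each solution is determined by one of the finitely many
   (m-i)-th roots of unity g. *)

Set Implicit Arguments.
Unset Strict Implicit.
Unset Printing Implicit Defensive.
Import GRing.Theory.
Local Open Scope ring_scope.

Section LinearComposition.
Variable R : comNzRingType.
Implicit Types (p a b h F : {poly R}) (g x : R).

Lemma size_le2_polyE p : (size p <= 2)%N -> p = p`_1 *: 'X + (p`_0)%:P.
Proof.
move=> le_p2; apply/polyP => [[|[|j]]]; rewrite coefD coefZ coefX coefC /=.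
- by rewrite mulr0 add0r.
- by rewrite mulr1 addr0.
- by rewrite mulr0 addr0 nth_default // (leq_trans le_p2).
Qed.

Lemma comp_poly_size_le2 a p : (size a <= 2)%N -> a \Po p = a`_1 *: p + (a`_0)%:P.
Proof.
by move/size_le2_polyE => {1}->; rewrite comp_polyD comp_polyZ comp_polyX comp_polyC.
Qed.

Lemma coef_pred_size_neq0 p n : size p = n.+1 -> p`_n != 0.
Proof.
move=> sz_p; have: lead_coef p != 0 by rewrite lead_coef_eq0 -size_poly_eq0 sz_p.
by rewrite lead_coefE sz_p.
Qed.

Lemma coef_comp_scaleX p g j : (p \Po (g *: 'X))`_j = p`_j * g ^+ j.
Proof.
have ->: p \Po (g *: 'X) = \poly_(i < size p) (p`_i * g ^+ i).
  by rewrite comp_polyE poly_def; apply: eq_bigr => i _; rewrite exprZn scalerA.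
by rewrite coef_poly; case: ltnP => // le_p; rewrite nth_default ?mul0r.
Qed.

Lemma coef_comp_XaddC p x k : (p \Po ('X + x%:P))`_k = p^`N(k).[x].
Proof.
elim/poly_ind: p k => [|p c IHp] k; first by rewrite comp_poly0 linear0 horner0 coef0.
rewrite comp_poly_MXaddC mulrDr !coefD coefMX coefMC coefC.
case: k => [|k] /=.
  by rewrite nderivn0 hornerMXaddC IHp nderivn0 add0r.
by rewrite nderivnMXaddC hornerD hornerMX !IHp addr0.
Qed.

Lemma horner_nderivn_penult p n x : (size p <= n.+2)%N ->
  p^`N(n).[x] = p`_n + p`_n.+1 *+ n.+1 * x.
Proof.
move=> le_p; suff ->: p^`N(n) = (p`_n.+1 *+ n.+1) *: 'X + (p`_n)%:P.
  by rewrite hornerD hornerZ hornerX hornerC addrC.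
apply/polyP => [[|[|j]]]; rewrite coef_nderivn coefD coefZ coefX coefC /=.
- by rewrite addn0 binn mulr0 add0r.
- by rewrite addn1 binSn mulr1 addr0.
- by rewrite mulr0 addr0 nth_default ?mul0rn // (leq_trans le_p) // !addnS !ltnS leq_addr.
Qed.

Lemma coef_comp_lin_penult p n g x : (size p <= n.+2)%N ->
  (p \Po (g *: 'X + x%:P))`_n = (p`_n + p`_n.+1 *+ n.+1 * x) * g ^+ n.
Proof.
move=> le_p; have ->: g *: 'X + x%:P = ('X + x%:P) \Po (g *: 'X).
  by rewrite comp_polyD comp_polyX comp_polyC.
by rewrite comp_polyA coef_comp_scaleX coef_comp_XaddC horner_nderivn_penult.
Qed.

Lemma semiconj_comp_inv F a b h (h' : {poly R}) : h \Po h' = 'X ->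
  F \Po b = a \Po F -> (F \Po h) \Po ((h' \Po b) \Po h) = a \Po (F \Po h).
Proof.
move=> hK Fab.
by rewrite comp_polyA -(comp_polyA F) (comp_polyA h) hK comp_polyX Fab comp_polyA.
Qed.

Lemma conj_comp_invK b h (h' : {poly R}) :
  h \Po h' = 'X -> (h \Po ((h' \Po b) \Po h)) \Po h' = b.
Proof. by move=> hK; rewrite !comp_polyA hK comp_polyX -comp_polyA hK comp_polyXr. Qed.

End LinearComposition.

Lemma roots_finite (R : idomainType) (p : {poly R}) :
  p != 0 -> exists rs : seq R, {subset root p <= rs}.
Proof.
move: {2}(size p) (leqnn (size p)) => n; elim: n p => [|n IHn] p le_p_n nz_p.
  by move: nz_p; rewrite -size_poly_eq0 -leqn0 le_p_n.
have [[x px]|no_root] := classic (exists x, root p x); last first.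
  by exists [::] => x px; case: no_root; exists x.
have [q def_p] := factor_theorem p x px.
have nz_q : q != 0 by apply: contraNneq nz_p => q0; rewrite def_p q0 mul0r.
have [|rs rsP] := IHn q _ nz_q.
  by move: le_p_n; rewrite def_p size_mul ?polyXsubC_eq0 // size_XsubC addn2.
exists (x :: rs) => y; rewrite in_cons -[y \in root p]/(root p y) def_p rootM root_XsubC.
by case/orP=> [/rsP -> | ->]; rewrite ?orbT.
Qed.

Section FieldPolynomials.
Variable K : fieldType.
Implicit Types (p G a : {poly K}) (g : K).

Lemma nterms_scaleXn (c : K) n : (nterms (c *: 'X^n) <= 1)%N.
Proof.
have [->|nz_c] := eqVneq c 0; first by rewrite scale0r /nterms polyseq0.
rewrite /nterms -mul_polyC polyseqMXn ?polyC_eq0 // -cat_nseq count_cat count_nseq.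
by rewrite polyseqC nz_c /= eqxx nz_c.
Qed.

Lemma exists_mid_coef p n : (size p <= n.+1)%N ->
  (1 < nterms (p - (p`_0)%:P))%N -> exists2 i, (0 < i < n)%N & p`_i != 0.
Proof.
move=> le_p two_terms; apply: NNPP => no_mid.
set q := p - (p`_0)%:P in two_terms.
suff q_mono : q = q`_n *: 'X^n.
  by move: two_terms; rewrite q_mono ltnNge nterms_scaleXn.
apply/polyP => j; rewrite coefZ coefXn.
have [-> | ne_jn] := eqVneq j n; first by rewrite mulr1.
rewrite mulr0 /q coefB coefC; case: j ne_jn => [|j] ne_jn /=; first by rewrite subrr.
rewrite subr0; have [lt_jn | le_nj] := ltnP j.+1 n.
  by apply/eqP; apply: contraT => nz_pj; case: no_mid; exists j.+1.
by rewrite nth_default // (leq_trans le_p) // ltn_neqAle eq_sym ne_jn.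
Qed.

Lemma semiconj_scaleX_exp G g (a1 a0 : K) j : G \Po (g *: 'X) = a1 *: G + a0%:P ->
  (0 < j)%N -> G`_j != 0 -> a1 = g ^+ j.
Proof.
move=> eqG j_gt0 nz_Gj; have := congr1 (coefp j) eqG.
rewrite /= coef_comp_scaleX coefD coefZ coefC gtn_eqF // addr0 [RHS]mulrC.
by move/(mulfI nz_Gj).
Qed.

Lemma semiconj_scaleX_coef0 G g (a1 a0 : K) : G \Po (g *: 'X) = a1 *: G + a0%:P ->
  a0 = (1 - a1) * G`_0.
Proof.
move=> eqG; have := congr1 (coefp 0) eqG.
rewrite /= coef_comp_scaleX coefD coefZ coefC expr0 mulr1 => E.
by rewrite mulrBl mul1r {1}E addrC addKr.
Qed.

Hypothesis charK : [pchar K] =i pred0.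

Lemma pchar0_mulrSn_eq0 (x : K) m : (x *+ m.+1 == 0) = (x == 0).
Proof. by rewrite -mulr_natr mulf_eq0 ((pcharf0P K).1 charK m.+1) orbF. Qed.

Definition depressing_shift p : K :=
  - p`_(size p).-2 / (lead_coef p *+ (size p).-1).

Lemma coef_comp_depressing_shift p n : size p = n.+2 ->
  (p \Po ('X + (depressing_shift p)%:P))`_n = 0.
Proof.
move=> sz_p; rewrite coef_comp_XaddC horner_nderivn_penult ?sz_p //.
have nz_lead : p`_n.+1 *+ n.+1 != 0.
  by rewrite pchar0_mulrSn_eq0 coef_pred_size_neq0.
rewrite /depressing_shift lead_coefE sz_p /=.
by rewrite mulNr mulrN mulrCA divff // mulr1 subrr.
Qed.

Section DepressedRigidity.
Variables (G : {poly K}) (n : nat).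
Hypotheses (sizeG : size G = n.+2) (depressedG : G`_n = 0).

Lemma depressed_semiconj_shift0 a g x : (0 < n)%N -> (size a <= 2)%N -> g != 0 ->
  G \Po (g *: 'X + x%:P) = a \Po G -> x = 0.
Proof.
move=> n_gt0 le_a nz_g eqG; have := congr1 (coefp n) eqG.
rewrite /= coef_comp_lin_penult ?sizeG // (comp_poly_size_le2 _ le_a) coefD coefZ coefC.
rewrite depressedG gtn_eqF // mulr0 addr0 add0r => /eqP.
rewrite mulf_eq0 expf_eq0 (negPf nz_g) andbF orbF mulf_eq0 pchar0_mulrSn_eq0.
by rewrite (negPf (coef_pred_size_neq0 sizeG)) => /eqP.
Qed.

Lemma depressed_semiconj_lin a g x i : (0 < i < n.+1)%N -> G`_i != 0 ->
    (size a <= 2)%N -> g != 0 -> G \Po (g *: 'X + x%:P) = a \Po G ->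
  [/\ x = 0, a = g ^+ n.+1 *: 'X + ((1 - g ^+ n.+1) * G`_0)%:P
    & (n.+1 - i).-unity_root g].
Proof.
case/andP=> i_gt0 i_lt nz_Gi le_a nz_g eqG.
have x0 : x = 0 := depressed_semiconj_shift0 (leq_trans i_gt0 i_lt) le_a nz_g eqG.
rewrite x0 addr0 (comp_poly_size_le2 _ le_a) in eqG.
have a1E : a`_1 = g ^+ n.+1 := semiconj_scaleX_exp eqG (ltn0Sn n)
  (coef_pred_size_neq0 sizeG).
split=> //; first by rewrite {1}(size_le2_polyE le_a) (semiconj_scaleX_coef0 eqG) a1E.
rewrite unity_rootE; apply/eqP/(mulIf (expf_neq0 i nz_g)).
by rewrite mul1r -exprD subnK 1?ltnW // -a1E (semiconj_scaleX_exp eqG i_gt0 nz_Gi).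
Qed.

End DepressedRigidity.

End FieldPolynomials.

Theorem lemma4p1 (K : fieldType) (F : {poly K}) :
  [pchar K] =i pred0 ->
  (forall u v : {poly K}, size u = 2%N -> size v = 2%N ->
     (2 <= nterms ((u \Po F) \Po v))%N) ->
  exists s : seq ({poly K} * {poly K}),
    forall a b : {poly K}, size a = 2%N -> size b = 2%N ->
      F \Po b = a \Po F -> (a, b) \in s.
Proof.
move=> charK Fterms.
set c := depressing_shift F; set h := 'X + c%:P; set h' := 'X - c%:P.
have hK : h \Po h' = 'X by rewrite -[h](comp_polyX h) comp_polyXaddC_K.
set G := F \Po h.
have [i /andP[i_gt0 i_lt] nz_Gi] : exists2 i, (0 < i < (size F).-1)%N & G`_i != 0.
  apply: exists_mid_coef; first by rewrite size_comp_poly2 ?size_XaddC // leqSpred.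
  have := Fterms _ _ (size_XsubC G`_0) (size_XaddC c).
  by rewrite -comp_polyA comp_polyB comp_polyX comp_polyC.
set n := (size F).-2.
have sizeF : size F = n.+2 by move: i_gt0 i_lt; rewrite /n; case: (size F) => [|[|m]].
have sizeG : size G = n.+2 by rewrite size_comp_poly2 ?size_XaddC.
have depG : G`_n = 0 by apply: coef_comp_depressing_shift.
rewrite sizeF /= in i_lt.
have [rs rsP] : exists rs : seq K, {subset (n.+1 - i).-unity_root <= rs}.
  by apply/roots_finite/monic_neq0/(monicXnsubC 1); rewrite subn_gt0.
exists [seq (g ^+ n.+1 *: 'X + ((1 - g ^+ n.+1) * G`_0)%:P, (h \Po (g *: 'X)) \Po h')
         | g <- rs].
move=> a b sz_a sz_b Fab.
set b' := (h' \Po b) \Po h.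
have sz_b' : size b' = 2 by rewrite !size_comp_poly2 ?size_XaddC ?size_XsubC.
set g := b'`_1.
have nz_g : g != 0 := coef_pred_size_neq0 sz_b'.
have Gb'a : G \Po (g *: 'X + (b'`_0)%:P) = a \Po G.
  by rewrite -size_le2_polyE ?sz_b' //; apply: semiconj_comp_inv.
have i_mid : (0 < i < n.+1)%N by rewrite i_gt0.
have [b'0 aE root_g] :=
  depressed_semiconj_lin charK sizeG depG i_mid nz_Gi (eq_leq sz_a) nz_g Gb'a.
have b'E : b' = g *: 'X by rewrite {1}(size_le2_polyE (eq_leq sz_b')) b'0 addr0.
apply/mapP; exists g; first exact: rsP.
by rewrite aE -(conj_comp_invK b hK) -/b' b'E.
Qed.
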